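(* Let $X$ be a non-empty set and let $E$ be any maximal right pre-reduced subset of $E(T_X^0)$, regarded as a subset of $TRel_X^0$. Then $TRel_X^0$ is an inductive left $E$-monoid, integral with $0\in E$, and $(Rel_X,\circledast,D)\cong Rest_0(E,TRel_X^0)$ as unary semigroups.
   Context: Relations are composed left to right: for binary relations $\rho,\tau$ on $X$, $\rho\tau=\{(x,y)\mid \exists z: (x,z)\in\rho,(z,y)\in\tau\}$. $Rel_X$ is the set of binary relations on $X$; $\mathrm{dom}(\rho)=\{x\mid \exists y:(x,y)\in\rho\}$. Demonic composition is $\rho\circledast\tau=\{(x,y)\in\rho\tau\mid \text{for all } z\in X,\ (x,z)\in\rho\Rightarrow z\in\mathrm{dom}(\tau)\}$, and $D(\rho)$ is the identity relation on $\mathrm{dom}(\rho)$; $(Rel_X,\circledast,D)$ is a left restriction monoid. $TRel_X$ is the set of left total relations ($\mathrm{dom}(\rho)=X$), a monoid under (ordinary = demonic) composition containing $T_X$ (total functions $X\to X$) as a submonoid; $T_X^0$ and $TRel_X^0$ denote these with a new zero element $0$ adjoined, so $T_X^0\subseteq TRel_X^0$. For a semigroup $S$, $E(S)$ is its set of idempotents; for $e,f\in E(S)$, $e\le_r f$ iff $e=ef$, and $e\sim_r f$ iff $e\le_r f$ and $f\le_r e$. $E\subseteq E(S)$ is right pre-reduced if $e=ef$ and $f=fe$ imply $e=f$ for $e,f\in E$, and maximal right pre-reduced if it contains exactly one element of each $\sim_r$-class of $E(S)$. A monoid with zero is integral if $st=0$ implies $s=0$ or $t=0$. Let $S$ be a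 monoid and $1\in E\subseteq E(S)$. $S$ is an inductive left $E$-monoid if $E$ is right pre-reduced, $(E,\le_r)$ is a meet-semilattice with meet $\wedge$, and (I1') for all $t\in S$, $e\in E$ there is $t\cdot e\in E$ such that for all $s\in S$: $ste=st$ iff $s(t\cdot e)=s$; (I2') for $s\in S$, $e,f\in E$: $se=sf=s$ implies $s(e\wedge f)=s$. If $S$ is also integral with zero and $0\in E$, $Rest_0(E,S)$ is the set $\{(e,s)\in E\times S\mid es=s,\ s=0\Rightarrow e=0\}$ with multiplication $(e,s)(f,t)=(e\wedge(s\cdot f),(e\wedge(s\cdot f))st)$ and $D((e,s))=(e,e)$. *)

From Stdlib Require Import Classical FunctionalExtensionality PropExtensionality.

Set Implicit Arguments.

Definition Rel (X : Type) := X -> X -> Prop.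

Definition rcomp {X : Type} (r t : Rel X) : Rel X :=
  fun x y => exists z, r x z /\ t z y.

Definition rdom {X : Type} (r : Rel X) (x : X) : Prop := exists y, r x y.

Definition demonic {X : Type} (r t : Rel X) : Rel X :=
  fun x y => rcomp r t x y /\ (forall z, r x z -> rdom t z).

Definition Drel {X : Type} (r : Rel X) : Rel X :=
  fun x y => x = y /\ rdom r x.

Definition left_total {X : Type} (r : Rel X) : Prop := forall x, exists y, r x y.

Definition TRel (X : Type) := { r : Rel X | left_total r }.

Lemma left_total_comp {X : Type} (r t : Rel X) :
  left_total r -> left_total t -> left_total (rcomp r t).
Proof.
  intros Hr Ht x. destruct (Hr x) as [z Hz]. destruct (Ht z) as [y Hy].
  exists y, z. split; assumption.
Qed.

Lemma left_total_id {X : Type} : left_total (fun x y : X => x = y).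
Proof. intros x; exists x; reflexivity. Qed.

Definition TRel_mul {X : Type} (r t : TRel X) : TRel X :=
  exist _ (rcomp (proj1_sig r) (proj1_sig t))
        (left_total_comp (proj2_sig r) (proj2_sig t)).

(* TRel_X^0 : None is the adjoined zero *)
Definition TRel0 (X : Type) := option (TRel X).

Definition TRel0_mul {X : Type} (a b : TRel0 X) : TRel0 X :=
  match a, b with
  | Some r, Some t => Some (TRel_mul r t)
  | _, _ => None
  end.

Definition TRel0_one {X : Type} : TRel0 X :=
  Some (exist _ (fun x y : X => x = y) left_total_id).

Definition TRel0_zero {X : Type} : TRel0 X := None.

Definition graph {X : Type} (f : X -> X) : Rel X := fun x y => f x = y.

Definition in_T0 {X : Type} (a : TRel0 X) : Prop :=
  match a with
  | None => True
  | Some r => exists f : X -> X, proj1_sig r = graph f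
  end.

Section Generic.
Variable S : Type.
Variable mul : S -> S -> S.

Definition idempotent (e : S) : Prop := mul e e = e.

Definition idempotents_in (P : S -> Prop) (e : S) : Prop := P e /\ idempotent e.

Definition le_r (e f : S) : Prop := e = mul e f.

Definition sim_r (e f : S) : Prop := le_r e f /\ le_r f e.

Definition right_pre_reduced (E : S -> Prop) : Prop :=
  forall e f, E e -> E f -> e = mul e f -> f = mul f e -> e = f.

Definition max_right_pre_reduced (Id : S -> Prop) (E : S -> Prop) : Prop :=
  right_pre_reduced E /\
  (forall e, E e -> Id e) /\
  (forall f, Id f -> exists e, E e /\ sim_r e f /\
                     forall e', E e' -> sim_r e' f -> e' = e).

Variable one : S.

(* Data witnessing that S is an inductive left E-monoid, with meet
   operation [meet] on E and operation [dot] (t . e). *)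
Definition inductive_data (E : S -> Prop) (meet dot : S -> S -> S) : Prop :=
  E one /\
  (forall e, E e -> idempotent e) /\
  right_pre_reduced E /\
  (forall e f, E e -> E f ->
     E (meet e f) /\ le_r (meet e f) e /\ le_r (meet e f) f /\
     (forall g, E g -> le_r g e -> le_r g f -> le_r g (meet e f))) /\
  (forall t e, E e ->
     E (dot t e) /\
     (forall s, mul (mul s t) e = mul s t <-> mul s (dot t e) = s)) /\
  (forall s e f, E e -> E f -> mul s e = s -> mul s f = s ->
     mul s (meet e f) = s).

Definition inductive_left_E_monoid (E : S -> Prop) : Prop :=
  exists meet dot, inductive_data E meet dot.

Variable zero : S.

Definition integral : Prop :=
  forall s t, mul s t = zero -> s = zero \/ t = zero.

Definition Rest0 (E : S -> Prop) (p : S * S) : Prop :=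
  E (fst p) /\ mul (fst p) (snd p) = snd p /\ (snd p = zero -> fst p = zero).

Definition Rest0_mul (meet dot : S -> S -> S) (p q : S * S) : S * S :=
  let g := meet (fst p) (dot (snd p) (fst q)) in
  (g, mul g (mul (snd p) (snd q))).

Definition Rest0_D (p : S * S) : S * S := (fst p, fst p).

End Generic.

Definition unary_iso_onto {A B : Type} (mulA : A -> A -> A) (DA : A -> A)
  (R : B -> Prop) (mulB : B -> B -> B) (DB : B -> B) : Prop :=
  exists phi : A -> B,
    (forall a a', phi a = phi a' -> a = a') /\
    (forall b, R b <-> exists a, phi a = b) /\
    (forall a a', phi (mulA a a') = mulB (phi a) (phi a')) /\
    (forall a, phi (DA a) = DB (phi a)).

From Stdlib Require Import Classical FunctionalExtensionality PropExtensionality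
  ProofIrrelevance ClassicalEpsilon.

(* Every element of TRel_X^0 is faithfully represented by a
   binary relation on X ([rel0]: the zero goes to the empty relation), and
   this representation turns the product into relational composition.  An
   idempotent of T_X^0 is then a retraction, i.e. the graph of an idempotent
   map (or the empty relation), and for retractions e, f we have
   e <=_r f iff Fix(e) ⊆ Fix(f).  Hence a maximal right pre-reduced set E
   contains, for every subset A ⊆ X, exactly one element [rep A] with fixed
   set A.  Meets and the operation t.e are the representatives of the
   obvious fixed sets, and any other choice of them agrees on E.  Finally
   rho |-> (rep (dom rho), rep (dom rho) * tot rho), where [tot rho] extends
   rho to a left total relation, is the required isomorphism: the fixed set
   of the first component recovers dom rho and the second component
   recovers rho on dom rho. *)

Section StructureUniqueness.
Context {S : Type} {mul : S -> S -> S} {E : S -> Prop}.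
Hypothesis E_pre : right_pre_reduced mul E.

Lemma right_identity_unique {d d' : S} :
  E d -> E d' -> idempotent mul d -> idempotent mul d' ->
  (forall s, mul s d = s <-> mul s d' = s) -> d = d'.
Proof.
  intros Hd Hd' Id Id' Hsame. apply E_pre; auto; unfold le_r; symmetry.
  - apply Hsame, Id.
  - apply Hsame, Id'.
Qed.

Lemma glb_unique {e f m m' : S} :
  E m -> E m' -> le_r mul m e -> le_r mul m f -> le_r mul m' e -> le_r mul m' f ->
  (forall g, E g -> le_r mul g e -> le_r mul g f -> le_r mul g m) ->
  (forall g, E g -> le_r mul g e -> le_r mul g f -> le_r mul g m') ->
  m = m'.
Proof.
  intros Hm Hm' ? ? ? ? Hglb Hglb'.
  apply E_pre; [assumption | assumption | apply Hglb' | apply Hglb]; assumption.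
Qed.

End StructureUniqueness.

Section Relations.
Context {X : Type}.

Lemma rel_ext (r t : Rel X) : (forall x y, r x y <-> t x y) -> r = t.
Proof.
  intros H. apply functional_extensionality; intro x.
  apply functional_extensionality; intro y. apply propositional_extensionality, H.
Qed.

Lemma rcomp_assoc (r q t : Rel X) : rcomp r (rcomp q t) = rcomp (rcomp r q) t.
Proof. apply rel_ext; unfold rcomp; firstorder. Qed.

Definition retraction (r : Rel X) : Prop :=
  (forall x y y', r x y -> r x y' -> y = y') /\ (forall x y, r x y -> r y y).

Lemma retraction_comp_fixed (r q : Rel X) (a y : X) :
  retraction r -> r a a -> (rcomp r q a y <-> q a y).
Proof.
  intros [Hfun _] Ha. split.
  - intros [z [Hz Hq]]. rewrite (Hfun _ _ _ Hz Ha) in Hq. exact Hq.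
  - intros Hq. exists a. split; assumption.
Qed.

Lemma retraction_comp_agree (r q q' : Rel X) :
  retraction r -> (forall a y, r a a -> (q a y <-> q' a y)) ->
  rcomp r q = rcomp r q'.
Proof.
  intros [Hfun Hfix] Hagree. apply rel_ext; intros x y.
  split; intros [z [Hz Hq]]; exists z; split; auto;
    apply (Hagree z y (Hfix _ _ Hz)); assumption.
Qed.

Lemma retraction_absorbs (r q : Rel X) :
  retraction r -> (rcomp q r = q <-> forall x y, q x y -> r y y).
Proof.
  intros [Hfun Hfix]. split.
  - intros Hqr x y Hq. rewrite <- Hqr in Hq. destruct Hq as [z [_ Hzy]]. eauto.
  - intros Himg. apply rel_ext; intros x y. split.
    + intros [z [Hq Hr]]. rewrite <- (Hfun _ _ _ (Himg _ _ Hq) Hr). exact Hq.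
    + intros Hq. exists y. split; eauto.
Qed.

Definition tot (rho : Rel X) : Rel X := fun x y => rho x y \/ ~ rdom rho x.

Lemma tot_left_total (rho : Rel X) : left_total (tot rho).
Proof.
  intros x. destruct (classic (rdom rho x)) as [[y Hy]|Hn].
  - exists y; left; exact Hy.
  - exists x; right; exact Hn.
Qed.

Lemma retraction_comp_tot (r rho : Rel X) :
  retraction r -> (forall y, r y y <-> rdom rho y) ->
  rcomp r (tot rho) = rcomp r rho.
Proof.
  intros Hr Hfix. apply retraction_comp_agree; auto. intros a y Ha.
  apply Hfix in Ha. unfold tot. tauto.
Qed.

Lemma demonic_dom (rho tau : Rel X) (y : X) :
  rdom (demonic rho tau) y <-> rdom rho y /\ (forall z, rho y z -> rdom tau z).
Proof.
  split.
  - intros [v [[w [Hw _]] Hall]]. split; [exists w|]; assumption.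
  - intros [[w Hw] Hall]. destruct (Hall w Hw) as [v Hv].
    exists v. split; [exists w; split|]; assumption.
Qed.

Lemma comp_on_demonic_dom (rR rT rho tau : Rel X) (a y : X) :
  retraction rR -> (forall y, rR y y <-> rdom rho y) ->
  retraction rT -> (forall y, rT y y <-> rdom tau y) ->
  rdom (demonic rho tau) a ->
  (rcomp (rcomp rR rho) (rcomp rT tau) a y <-> demonic rho tau a y).
Proof.
  intros HR HRfix HT HTfix Ha. apply demonic_dom in Ha as [Hdom Hall].
  unfold demonic. split.
  - intros [b [Hab Hby]].
    apply (retraction_comp_fixed _ rho a b HR (proj2 (HRfix a) Hdom)) in Hab.
    apply (retraction_comp_fixed _ tau b y HT (proj2 (HTfix b) (Hall b Hab))) in Hby.
    split; [exists b; split|]; assumption.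
  - intros [[b [Hab Hby]] _]. exists b. split.
    + apply retraction_comp_fixed; [|apply HRfix|]; assumption.
    + apply retraction_comp_fixed; [|apply HTfix, Hall|]; assumption.
Qed.

Lemma Drel_dom (rho : Rel X) : rdom (Drel rho) = rdom rho.
Proof.
  apply functional_extensionality; intro x. apply propositional_extensionality.
  unfold Drel, rdom. split; [intros [_ [_ H]]; exact H | intros H; exists x; auto].
Qed.

Lemma retraction_comp_Drel (r rho : Rel X) :
  retraction r -> (forall y, r y y <-> rdom rho y) -> rcomp r (Drel rho) = r.
Proof.
  intros [Hfun Hfix] Hdom. apply rel_ext; intros x y. split.
  - intros [z [Hz [<- _]]]. exact Hz.
  - intros Hxy. exists y. split; [|split; [|apply Hdom]]; eauto.
Qed.

End Relations.

Definition totT {X : Type} (rho : Rel X) : TRel X :=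
  exist _ (tot rho) (tot_left_total rho).

Section Representation.
Context {X : Type}.

Definition rel0 (a : TRel0 X) : Rel X :=
  match a with Some r => proj1_sig r | None => fun _ _ => False end.

Definition fixed (a : TRel0 X) (y : X) : Prop := rel0 a y y.

Lemma rel0_mul (a b : TRel0 X) : rel0 (TRel0_mul a b) = rcomp (rel0 a) (rel0 b).
Proof.
  destruct a as [a|], b as [b|]; try reflexivity;
    apply rel_ext; unfold rcomp; simpl; firstorder.
Qed.

Lemma rel0_totT (rho : Rel X) : rel0 (Some (totT rho)) = tot rho.
Proof. reflexivity. Qed.

Lemma idempotent_T0_retraction {e : TRel0 X} :
  idempotents_in (@TRel0_mul X) (@in_T0 X) e -> retraction (rel0 e).
Proof.
  destruct e as [r|]; [|split; simpl; tauto].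
  intros [[f Hf] Hid]. apply (f_equal rel0) in Hid.
  rewrite rel0_mul in Hid. simpl in Hid |- *. rewrite Hf in Hid |- *.
  assert (Hff : forall x, f (f x) = f x).
  { intro x. assert (H : rcomp (graph f) (graph f) x (f (f x)))
      by (exists (f x); split; reflexivity).
    rewrite Hid in H. symmetry. exact H. }
  unfold graph. split.
  - intros x y y' <- <-. reflexivity.
  - intros x y <-. apply Hff.
Qed.

Hypothesis HX : inhabited X.

(* The representation is faithful because X is non-empty: a left total
   relation is never empty. *)
Lemma rel0_inj (a b : TRel0 X) : rel0 a = rel0 b -> a = b.
Proof.
  assert (Hne : forall r : TRel X, proj1_sig r <> (fun _ _ => False)).
  { intros r Hr. destruct HX as [x]. destruct (proj2_sig r x) as [y Hy].
    rewrite Hr in Hy. exact Hy. }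
  destruct a as [[a Ha]|], b as [[b Hb]|]; simpl; intros Hab.
  - subst b. do 2 f_equal. apply proof_irrelevance.
  - exfalso. exact (Hne (exist _ a Ha) Hab).
  - exfalso. exact (Hne (exist _ b Hb) (eq_sym Hab)).
  - reflexivity.
Qed.

Lemma TRel0_mul_assoc (a b c : TRel0 X) :
  TRel0_mul a (TRel0_mul b c) = TRel0_mul (TRel0_mul a b) c.
Proof. apply rel0_inj. rewrite !rel0_mul. apply rcomp_assoc. Qed.

Lemma mul_absorbs (s : TRel0 X) {e : TRel0 X} :
  retraction (rel0 e) ->
  (TRel0_mul s e = s <-> forall x y, rel0 s x y -> fixed e y).
Proof.
  intros He. rewrite <- (retraction_absorbs _ (rel0 s) He), <- rel0_mul.
  split; [intros ->; reflexivity | apply rel0_inj].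
Qed.

Lemma le_r_fixed {e f : TRel0 X} :
  retraction (rel0 e) -> retraction (rel0 f) ->
  (le_r (@TRel0_mul X) e f <-> forall y, fixed e y -> fixed f y).
Proof.
  intros He Hf. unfold le_r.
  transitivity (TRel0_mul e f = e); [split; intros H; symmetry; exact H|].
  rewrite (mul_absorbs e Hf). unfold fixed.
  destruct He as [_ Hfix]. split; eauto.
Qed.

(* Every subset of X is the fixed set of an idempotent of T_X^0: the zero
   for the empty set, otherwise a retraction onto it. *)
Lemma retraction_onto (A : X -> Prop) :
  exists g, idempotents_in (@TRel0_mul X) (@in_T0 X) g /\
            forall y, fixed g y <-> A y.
Proof.
  destruct (classic (exists a, A a)) as [[a Ha]|Hempty].
  2:{ exists None. split; [split; [exact I | reflexivity]|].
      intros y. simpl. split; [tauto | intros Hy; apply Hempty; exists y; exact Hy]. }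
  set (f := fun x => if excluded_middle_informative (A x) then x else a).
  assert (Hf_fix : forall y, f y = y <-> A y).
  { intro y; unfold f. destruct (excluded_middle_informative (A y)); split;
      intros; subst; tauto. }
  assert (Hf_in : forall y, A (f y)).
  { intro y; unfold f. destruct (excluded_middle_informative (A y)); assumption. }
  assert (Htot : left_total (graph f)) by (intro x; exists (f x); reflexivity).
  exists (Some (exist _ (graph f) Htot)). split; [split|].
  - exists f; reflexivity.
  - apply rel0_inj. rewrite rel0_mul. simpl. apply rel_ext. unfold rcomp, graph.
    intros x y. split.
    + intros [z [<- <-]]. symmetry. apply Hf_fix, Hf_in.
    + intros <-. exists (f x). split; [reflexivity | apply Hf_fix, Hf_in].
  - exact Hf_fix.
Qed.

End Representation.

Section MaximalSet.
Context {X : Type}.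
Hypothesis HX : inhabited X.
Variable E : TRel0 X -> Prop.
Hypothesis E_max :
  max_right_pre_reduced (@TRel0_mul X) (idempotents_in (@TRel0_mul X) (@in_T0 X)) E.

Lemma E_pre : right_pre_reduced (@TRel0_mul X) E.
Proof. apply E_max. Qed.

Lemma E_idempotent (e : TRel0 X) : E e -> idempotent (@TRel0_mul X) e.
Proof. intros He. apply (proj1 (proj2 E_max) e He). Qed.

Lemma E_retraction (e : TRel0 X) : E e -> retraction (rel0 e).
Proof. intros He. exact (idempotent_T0_retraction (proj1 (proj2 E_max) e He)). Qed.

Lemma E_fixed_inj (e e' : TRel0 X) :
  E e -> E e' -> (forall y, fixed e y <-> fixed e' y) -> e = e'.
Proof.
  intros He He' Hsame.
  pose proof (E_retraction e He). pose proof (E_retraction e' He').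
  apply E_pre; auto; apply le_r_fixed; auto; intros y; apply Hsame.
Qed.

Lemma E_represents (A : X -> Prop) : exists e, E e /\ forall y, fixed e y <-> A y.
Proof.
  destruct (retraction_onto HX A) as [g [Hg HgA]].
  destruct (proj2 (proj2 E_max) g Hg) as [e [He [[Heg Hge] _]]].
  pose proof (E_retraction e He) as Re. pose proof (idempotent_T0_retraction Hg) as Rg.
  rewrite (le_r_fixed HX Re Rg) in Heg. rewrite (le_r_fixed HX Rg Re) in Hge.
  exists e. split; [exact He|]. intros y. rewrite <- HgA. split; auto.
Qed.

Definition rep (A : X -> Prop) : TRel0 X :=
  epsilon (inhabits None) (fun e => E e /\ forall y, fixed e y <-> A y).

Lemma rep_spec (A : X -> Prop) : E (rep A) /\ forall y, fixed (rep A) y <-> A y.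
Proof. unfold rep. apply epsilon_spec, E_represents. Qed.

Lemma rep_E (A : X -> Prop) : E (rep A).
Proof. apply rep_spec. Qed.

Lemma rep_retraction (A : X -> Prop) : retraction (rel0 (rep A)).
Proof. apply E_retraction, rep_E. Qed.

Lemma rep_fixed (A : X -> Prop) (y : X) : fixed (rep A) y <-> A y.
Proof. apply rep_spec. Qed.

Lemma rep_eq (A : X -> Prop) (e : TRel0 X) :
  E e -> (forall y, fixed e y <-> A y) -> rep A = e.
Proof.
  intros He HeA. apply E_fixed_inj; [apply rep_E | exact He |].
  intros y. rewrite rep_fixed, HeA. reflexivity.
Qed.

Lemma E_zero : E TRel0_zero.
Proof.
  replace TRel0_zero with (rep (fun _ => False)); [apply rep_E|].
  apply (rel0_inj HX). apply rel_ext; intros x y; simpl; split; [|tauto].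
  intros Hxy. apply (rep_fixed (fun _ => False) y).
  exact (proj2 (rep_retraction _) x y Hxy).
Qed.

Lemma E_one : E TRel0_one.
Proof.
  replace TRel0_one with (rep (fun _ => True)); [apply rep_E|].
  apply (rel0_inj HX). apply rel_ext; intros x y; simpl.
  assert (Hx : rel0 (rep (fun _ => True)) x x) by (apply rep_fixed; exact I).
  split; [|intros <-; exact Hx].
  intros Hxy. exact (proj1 (rep_retraction _) x x y Hx Hxy).
Qed.

Definition canon_meet (e f : TRel0 X) : TRel0 X :=
  rep (fun y => fixed e y /\ fixed f y).

Definition canon_dot (t e : TRel0 X) : TRel0 X :=
  rep (fun y => forall z, rel0 t y z -> fixed e z).

Lemma canon_meet_glb (e f : TRel0 X) : E e -> E f ->
  let m := canon_meet e f in
  E m /\ le_r (@TRel0_mul X) m e /\ le_r (@TRel0_mul X) m f /\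
  (forall g, E g -> le_r (@TRel0_mul X) g e -> le_r (@TRel0_mul X) g f ->
             le_r (@TRel0_mul X) g m).
Proof.
  intros He Hf m. unfold m, canon_meet. pose proof (E_retraction e He) as Re.
  pose proof (E_retraction f Hf) as Rf. pose proof (rep_retraction
    (fun y => fixed e y /\ fixed f y)) as Rm.
  split; [apply rep_E|]. split; [|split].
  - apply (le_r_fixed HX Rm Re). intros y Hy. rewrite rep_fixed in Hy. tauto.
  - apply (le_r_fixed HX Rm Rf). intros y Hy. rewrite rep_fixed in Hy. tauto.
  - intros g Hg Hge Hgf. pose proof (E_retraction g Hg) as Rg.
    rewrite (le_r_fixed HX Rg Re) in Hge. rewrite (le_r_fixed HX Rg Rf) in Hgf.
    apply (le_r_fixed HX Rg Rm). intros y Hy. apply rep_fixed. auto.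
Qed.

Lemma canon_meet_I2 (s e f : TRel0 X) : E e -> E f ->
  TRel0_mul s e = s -> TRel0_mul s f = s -> TRel0_mul s (canon_meet e f) = s.
Proof.
  intros He Hf Hse Hsf.
  rewrite (mul_absorbs HX s (E_retraction e He)) in Hse.
  rewrite (mul_absorbs HX s (E_retraction f Hf)) in Hsf.
  apply (mul_absorbs HX s (rep_retraction _)). intros x y Hxy.
  apply rep_fixed. eauto.
Qed.

Lemma canon_dot_I1 (t e : TRel0 X) : E e ->
  forall s, TRel0_mul (TRel0_mul s t) e = TRel0_mul s t <->
            TRel0_mul s (canon_dot t e) = s.
Proof.
  intros He s. unfold canon_dot.
  rewrite (mul_absorbs HX _ (E_retraction e He)),
          (mul_absorbs HX s (rep_retraction _)), rel0_mul.
  unfold rcomp. setoid_rewrite rep_fixed. firstorder.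
Qed.

Lemma canonical_inductive_data :
  inductive_data (@TRel0_mul X) TRel0_one E canon_meet canon_dot.
Proof.
  split; [exact E_one|]. split; [exact E_idempotent|]. split; [exact E_pre|].
  split; [exact canon_meet_glb|]. split; [|exact canon_meet_I2].
  intros t e He. split; [apply rep_E | apply canon_dot_I1, He].
Qed.


Definition phi (rho : Rel X) : TRel0 X * TRel0 X :=
  (rep (rdom rho), TRel0_mul (rep (rdom rho)) (Some (totT rho))).

Lemma rel0_phi_snd (rho : Rel X) :
  rel0 (snd (phi rho)) = rcomp (rel0 (rep (rdom rho))) rho.
Proof.
  simpl. rewrite rel0_mul, rel0_totT. apply retraction_comp_tot;
    [apply rep_retraction | apply rep_fixed].
Qed.

(* rho is recovered from phi rho on dom(rho), the fixed set of its first
   component. *)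
Lemma phi_injective (rho rho' : Rel X) : phi rho = phi rho' -> rho = rho'.
Proof.
  intros Heq.
  pose proof (f_equal fst Heq) as Hfst. simpl in Hfst.
  pose proof (f_equal (fun p => rel0 (snd p)) Heq) as Hsnd. cbv beta in Hsnd.
  rewrite !rel0_phi_snd, <- Hfst in Hsnd.
  set (e := rep (rdom rho)) in Hsnd.
  assert (Hdom' : forall x, rdom rho' x <-> fixed e x)
    by (intros x; unfold e; rewrite Hfst; symmetry; apply rep_fixed).
  assert (Hagree : forall x y, fixed e x -> (rho x y <-> rho' x y)).
  { intros x y Hx.
    pose proof (rep_retraction (rdom rho)) as Re. fold e in Re.
    rewrite <- (retraction_comp_fixed _ rho x y Re Hx),
            <- (retraction_comp_fixed _ rho' x y Re Hx), Hsnd.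
    reflexivity. }
  apply rel_ext; intros x y. split; intros Hxy; apply Hagree; auto.
  - apply rep_fixed. exists y. exact Hxy.
  - apply Hdom'. exists y. exact Hxy.
Qed.

Lemma phi_image (b : TRel0 X * TRel0 X) :
  Rest0 (@TRel0_mul X) TRel0_zero E b <-> exists rho, phi rho = b.
Proof.
  destruct b as [e s]. unfold Rest0; simpl. split.
  - intros [He [Hes Hzero]].
    set (rho := fun x y => fixed e x /\ rel0 s x y).
    assert (Hdom : forall y, fixed e y <-> rdom rho y).
    { intros y. split; [intros Hy | intros [z [Hy _]]; exact Hy].
      destruct s as [sg|].
      - destruct (proj2_sig sg y) as [z Hz]. exists z. split; assumption.
      - specialize (Hzero eq_refl). subst e. destruct Hy. }
    exists rho. unfold phi.
    rewrite (rep_eq _ _ He Hdom). f_equal.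
    apply (rel0_inj HX). transitivity (rel0 (TRel0_mul e s)); [|rewrite Hes; reflexivity].
    rewrite !rel0_mul, rel0_totT, (retraction_comp_tot _ _ (E_retraction e He) Hdom).
    apply retraction_comp_agree; [apply E_retraction, He|].
    intros a y Ha. unfold rho. tauto.
  - intros [rho Hphi]. unfold phi in Hphi. injection Hphi as <- <-.
    split; [apply rep_E|]. split.
    + rewrite (TRel0_mul_assoc HX), (E_idempotent _ (rep_E _)). reflexivity.
    + destruct (rep (rdom rho)); [discriminate | reflexivity].
Qed.

Lemma phi_D (rho : Rel X) : phi (Drel rho) = Rest0_D (phi rho).
Proof.
  unfold phi, Rest0_D. cbn [fst snd]. rewrite Drel_dom. f_equal.
  apply (rel0_inj HX). rewrite rel0_mul, rel0_totT.
  rewrite (retraction_comp_tot _ _ (rep_retraction (rdom rho))).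
  - apply retraction_comp_Drel; [apply rep_retraction | intro; apply rep_fixed].
  - intro y. rewrite Drel_dom. apply rep_fixed.
Qed.

Section AnyStructure.
Variables meet dot : TRel0 X -> TRel0 X -> TRel0 X.
Hypothesis data : inductive_data (@TRel0_mul X) TRel0_one E meet dot.

Lemma meet_canonical (e f : TRel0 X) : E e -> E f -> meet e f = canon_meet e f.
Proof.
  intros He Hf. destruct data as [_ [_ [_ [Hmeet _]]]].
  destruct (Hmeet e f He Hf) as [Hm [Hme [Hmf Hglb]]].
  destruct (canon_meet_glb e f He Hf) as [Hc [Hce [Hcf Hcglb]]].
  apply (glb_unique E_pre Hm Hc Hme Hmf Hce Hcf Hglb Hcglb).
Qed.

Lemma dot_canonical (t e : TRel0 X) : E e -> dot t e = canon_dot t e.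
Proof.
  intros He. destruct data as [_ [_ [_ [_ [Hdot _]]]]].
  destruct (Hdot t e He) as [Hd HI1].
  apply (right_identity_unique E_pre Hd (rep_E _) (E_idempotent _ Hd)
           (E_idempotent _ (rep_E _))).
  intros s. rewrite <- HI1. apply canon_dot_I1, He.
Qed.


Lemma phi_demonic (rho tau : Rel X) :
  phi (demonic rho tau) = Rest0_mul (@TRel0_mul X) meet dot (phi rho) (phi tau).
Proof.
  unfold Rest0_mul, phi. cbn [fst snd].
  set (eR := rep (rdom rho)). set (eT := rep (rdom tau)).
  set (t := TRel0_mul eR (Some (totT rho))).
  set (g := canon_meet eR (canon_dot t eT)).
  assert (HR : retraction (rel0 eR)) by apply rep_retraction.
  assert (HRfix : forall y, fixed eR y <-> rdom rho y) by (intro; apply rep_fixed).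
  assert (HT : retraction (rel0 eT)) by apply rep_retraction.
  assert (HTfix : forall y, fixed eT y <-> rdom tau y) by (intro; apply rep_fixed).
  assert (Ht : rel0 t = rcomp (rel0 eR) rho) by exact (rel0_phi_snd rho).
  assert (Hg : meet eR (dot t eT) = g).
  { rewrite dot_canonical, meet_canonical; [reflexivity | apply rep_E ..]. }
  assert (Hgfix : forall y, fixed g y <-> rdom (demonic rho tau) y).
  { intros y. unfold g, canon_meet, canon_dot.
    rewrite rep_fixed, rep_fixed, Ht, HRfix, demonic_dom.
    split; intros [Hy Hall]; split; try exact Hy; intros z Hz.
    - apply HTfix, Hall. apply (retraction_comp_fixed _ rho y z HR); [apply HRfix|]; assumption.
    - apply HTfix, Hall.
      rewrite (retraction_comp_fixed _ rho y z HR (proj2 (HRfix y) Hy)) in Hz. exact Hz. }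
  assert (Hrep : rep (rdom (demonic rho tau)) = g) by (apply rep_eq; [apply rep_E | exact Hgfix]).
  rewrite Hg, Hrep. f_equal. apply (rel0_inj HX).
  assert (Hgret : retraction (rel0 g)) by apply rep_retraction.
  rewrite !rel0_mul, !rel0_totT, Ht, (retraction_comp_tot _ tau HT HTfix),
    (retraction_comp_tot _ _ Hgret Hgfix).
  apply retraction_comp_agree; [exact Hgret|]. intros a y Ha. symmetry.
  apply comp_on_demonic_dom; [assumption .. | apply Hgfix, Ha].
Qed.

End AnyStructure.

End MaximalSet.

Theorem theorem7p6 (X : Type) (HX : inhabited X) (E : TRel0 X -> Prop) :
  max_right_pre_reduced (@TRel0_mul X)
    (idempotents_in (@TRel0_mul X) (@in_T0 X)) E ->
  inductive_left_E_monoid (@TRel0_mul X) TRel0_one E /\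
  integral (@TRel0_mul X) TRel0_zero /\
  E TRel0_zero /\
  (forall meet dot : TRel0 X -> TRel0 X -> TRel0 X,
     inductive_data (@TRel0_mul X) TRel0_one E meet dot ->
     unary_iso_onto (@demonic X) (@Drel X)
       (Rest0 (@TRel0_mul X) TRel0_zero E)
       (Rest0_mul (@TRel0_mul X) meet dot)
       (@Rest0_D (TRel0 X))).
Proof.
  intros E_max. split; [|split; [|split]].
  - exists (canon_meet E), (canon_dot E). exact (canonical_inductive_data HX E E_max).
  - intros [s|] [t|] Hst; simpl in Hst; auto. discriminate.
  - exact (E_zero HX E E_max).
  - intros meet dot data. exists (phi E). split; [|split; [|split]].
    + exact (phi_injective HX E E_max).
    + exact (phi_image HX E E_max).
    + exact (phi_demonic HX E E_max meet dot data).
    + exact (phi_D HX E E_max).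
Qed.
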